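(* Let $\Gamma$ be a Neumaier graph with parameters $(n,k,\lambda;a,c)$. Then the number of edges of $\Gamma$ is at least $$k(k-\lambda)+(k-c+1)(a-1)+\frac{(k-c+1)(\lambda-a+1)}{2}+\frac{(c-1)(c-2)}{2}.$$
   Context: All graphs are finite, simple, undirected and connected. A graph is edge-regular with parameters $(n,k,\lambda)$ if it has $n$ vertices, is $k$-regular, and any two adjacent vertices have exactly $\lambda$ common neighbours. A clique $C$ is a regular clique with nexus $a$ if every vertex not in $C$ has exactly $a$ neighbours in $C$. A Neumaier graph is a non-complete edge-regular graph containing a regular clique; it has parameters $(n,k,\lambda;a,c)$ if it is edge-regular with parameters $(n,k,\lambda)$ and contains a regular clique of size $c$ with nexus $a$. *)

From mathcomp Require Import all_boot all_order all_algebra.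
Set Implicit Arguments. Unset Strict Implicit. Unset Printing Implicit Defensive.

Definition simple_graph (T : finType) (e : rel T) : Prop :=
  symmetric e /\ irreflexive e.

Definition connected_graph (T : finType) (e : rel T) : Prop :=
  forall x y : T, connect e x y.

Definition nbhd (T : finType) (e : rel T) (x : T) : {set T} := [set y | e x y].

Definition edge_regular (T : finType) (e : rel T) (n k lambda : nat) : Prop :=
  #|T| = n /\
  (forall x : T, #|nbhd e x| = k) /\
  (forall x y : T, e x y -> #|nbhd e x :&: nbhd e y| = lambda).

Definition is_clique (T : finType) (e : rel T) (C : {set T}) : Prop :=
  forall x y, x \in C -> y \in C -> x != y -> e x y.

Definition regular_clique (T : finType) (e : rel T) (C : {set T}) (a : nat) : Prop :=
  C != set0 /\ is_clique e C /\
  (forall x, x \notin C -> #|nbhd e x :&: C| = a).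

Definition complete_graph (T : finType) (e : rel T) : Prop :=
  forall x y : T, x != y -> e x y.

Definition neumaier_graph (T : finType) (e : rel T) (n k lambda a c : nat) : Prop :=
  simple_graph e /\ connected_graph e /\ ~ complete_graph e /\
  edge_regular e n k lambda /\
  exists C : {set T}, regular_clique e C a /\ #|C| = c.

Definition num_edges (T : finType) (e : rel T) : nat :=
  #|[set p : T * T | e p.1 p.2]| %/ 2.

From mathcomp Require Import all_boot all_order all_algebra.
From mathcomp Require Import zify lra.
Import GRing.Theory Num.Theory.

(* Fix x in the regular clique C and put d := |N(x) \ C| = k - c + 1, s := |C \ x| = c - 1.
   Counting the edges between C \ x and N(x) \ C from both sides gives
   s (lambda + 1 - s) = d (a - 1): a vertex y of C \ x has lambda - (c - 2) common
   neighbours with x outside C, and a vertex of N(x) \ C has a - 1 neighbours in C \ x.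
   For an edge xy, N(x) ∪ N(y) has 2k - lambda vertices, so n ≥ 2k - lambda and there
   are nk/2 ≥ k(2k - lambda)/2 edges; by the counting identity the claimed bound is
   exactly k(2k - lambda)/2. *)

Set Implicit Arguments.
Unset Strict Implicit.
Unset Printing Implicit Defensive.

Lemma card_set_in_sum (T : finType) (A : {set T}) (P : pred T) :
  #|[set t in A | P t]| = \sum_(t in A) P t.
Proof.
rewrite -sum1_card (eq_bigl (fun t => (t \in A) && P t)) => [|t]; last by rewrite inE.
by rewrite big_mkcondr; apply: eq_bigr => t _; case: (P t).
Qed.

Lemma double_count (T : finType) (A B : {set T}) (R : rel T) :
  \sum_(y in A) #|[set z in B | R y z]| = \sum_(z in B) #|[set y in A | R y z]|.
Proof.
under eq_bigr do rewrite card_set_in_sum.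
by rewrite exchange_big; under [RHS]eq_bigr do rewrite card_set_in_sum.
Qed.

Lemma card_arcs (T : finType) (e : rel T) :
  #|[set p : T * T | e p.1 p.2]| = \sum_x #|nbhd e x|.
Proof.
rewrite -sum1_card big_mkcond /=.
rewrite (eq_bigr (fun p : T * T => (e p.1 p.2 : nat))) => [|p _]; last by rewrite inE; case: (e _ _).
rewrite -(pair_bigA _ (fun x y => (e x y : nat))) /=.
apply: eq_bigr => x _; rewrite -sum1_card [RHS]big_mkcond /=.
by apply: eq_bigr => y _; rewrite inE; case: (e x y).
Qed.

Section SimpleGraph.

Variables (T : finType) (e : rel T).
Hypotheses (e_sym : symmetric e) (e_irr : irreflexive e).

Lemma card_arcs_oriented :
  #|[set p : T * T | e p.1 p.2]| =
  #|[set p : T * T | e p.1 p.2 & enum_rank p.1 < enum_rank p.2]|.*2.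
Proof.
set A := [set p : T * T | _ & _].
pose swap (p : T * T) := (p.2, p.1).
have swap_inj : injective swap by move=> [? ?] [? ?] [-> ->].
have -> : [set p : T * T | e p.1 p.2] = A :|: swap @^-1: A.
  apply/setP => [[u v]]; rewrite !inE /= (e_sym v u).
  case: (boolP (e u v)) => //= euv.
  have : u != v by apply: contraTneq euv => ->; rewrite e_irr.
  by rewrite -(inj_eq enum_rank_inj) neq_ltn.
rewrite cardsU card_preimset //.
have -> : A :&: swap @^-1: A = set0.
  by apply/setP => [[u v]]; rewrite !inE /=; apply/negP => /andP[/andP[_ ?] /andP[_ ?]]; lia.
by rewrite cards0 subn0 addnn.
Qed.

Lemma handshake : (num_edges e).*2 = \sum_x #|nbhd e x|.
Proof. by rewrite /num_edges -card_arcs card_arcs_oriented divn2 doubleK. Qed.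

Lemma num_edges_regular k : (forall x, #|nbhd e x| = k) -> (num_edges e).*2 = #|T| * k.
Proof. by move=> reg; rewrite handshake; under eq_bigr do rewrite reg; rewrite sum_nat_const. Qed.

Lemma edge_regular_double_deg_le n k lambda x y :
  edge_regular e n k lambda -> e x y -> k.*2 <= n + lambda.
Proof.
move=> [<- [reg lam]] exy.
have := cardsUI (nbhd e x) (nbhd e y); rewrite !reg (lam _ _ exy) -addnn => <-.
by rewrite leq_add2r max_card.
Qed.

Section RegularClique.

Variables (k lambda a : nat) (C : {set T}) (x : T).
Hypotheses (reg : forall y, #|nbhd e y| = k)
  (lam : forall y z, e y z -> #|nbhd e y :&: nbhd e z| = lambda)
  (C_clique : is_clique e C) (C_nexus : forall z, z \notin C -> #|nbhd e z :&: C| = a)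
  (xC : x \in C).

Let D := nbhd e x :\: C.

Lemma clique_nbhdI y : y \in C -> nbhd e y :&: C = C :\ y.
Proof.
move=> yC; apply/setP => z; rewrite !inE.
case: (eqVneq z y) => [->|zy]; first by rewrite e_irr.
by case zC: (z \in C); rewrite ?andbF // andbT C_clique // eq_sym.
Qed.

Lemma card_nbhd_clique_split : #|D| + #|C :\ x| = k.
Proof. by rewrite -(clique_nbhdI xC) addnC cardsID reg. Qed.

Lemma card_common_nbhd_off_clique y :
  y \in C :\ x -> #|[set z in D | e y z]| + #|C :\ x| = lambda.+1.
Proof.
move=> yCx; have /andP[yx yC] : (y != x) && (y \in C) by rewrite -in_setD1.
have -> : [set z in D | e y z] = (nbhd e x :&: nbhd e y) :\: C.
  by apply/setP => z; rewrite !inE; case: (e x z); case: (z \in C); case: (e y z).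
have Cxy : nbhd e x :&: nbhd e y :&: C = (C :\ x) :\ y.
  by rewrite -setIA (clique_nbhdI yC) setIDA (clique_nbhdI xC).
rewrite (cardsD1 y (C :\ x)) yCx -(lam (C_clique xC yC _)); last by rewrite eq_sym.
by rewrite -(cardsID C (nbhd e x :&: nbhd e y)) Cxy add1n addnS addnC.
Qed.

Lemma card_clique_nbhd_off_clique z :
  z \in D -> #|[set y in C :\ x | e y z]|.+1 = a.
Proof.
rewrite !inE => /andP[zC exz].
have -> : [set y in C :\ x | e y z] = (nbhd e z :&: C) :\ x.
  by apply/setP => y; rewrite !inE (e_sym y z) andbAC andbA.
have xNzC : x \in nbhd e z :&: C by rewrite !inE e_sym exz.
by rewrite -(C_nexus zC) [RHS](cardsD1 x) xNzC.
Qed.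

Lemma regular_clique_count :
  #|D| * a + #|C :\ x| * #|C :\ x| = #|D| + #|C :\ x| * lambda.+1.
Proof.
have rows : \sum_(y in C :\ x) #|[set z in D | e y z]| + #|C :\ x| * #|C :\ x|
            = #|C :\ x| * lambda.+1.
  rewrite -!sum_nat_const -big_split; apply: eq_bigr => y.
  exact: card_common_nbhd_off_clique.
have cols : \sum_(z in D) #|[set y in C :\ x | e y z]| + #|D| = #|D| * a.
  rewrite -sum_nat_const -[X in _ + X = _]sum1_card -big_split; apply: eq_bigr => z zD.
  by rewrite /= addn1 card_clique_nbhd_off_clique.
have := double_count (C :\ x) D e; lia.
Qed.

End RegularClique.

End SimpleGraph.

Local Open Scope ring_scope.

Theorem proposition3p8 (T : finType) (e : rel T) (n k lambda a c : nat) :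
  neumaier_graph e n k lambda a c ->
  (k%:Q * (k%:Q - lambda%:Q) + (k%:Q - c%:Q + 1) * (a%:Q - 1)
   + (k%:Q - c%:Q + 1) * (lambda%:Q - a%:Q + 1) / 2
   + (c%:Q - 1) * (c%:Q - 2) / 2) <= (num_edges e)%:Q.
Proof.
move=> [[e_sym e_irr] [_ [_ [reg_e [C [[/set0Pn[x xC] [C_clique C_nexus]] <-]]]]]].
have [cardT [reg lam]] := reg_e.
have count := regular_clique_count e_sym e_irr lam C_clique C_nexus xC.
have split_k := card_nbhd_clique_split e_irr reg C_clique xC.
have card_C : #|C| = #|C :\ x|.+1 by rewrite (cardsD1 x C) xC.
have edges := num_edges_regular e_sym e_irr reg; rewrite cardT in edges.
have bound : (k * k.*2 <= k * (n + lambda))%N.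
  case: (posnP k) => [-> // | k_gt0]; rewrite leq_mul2l; apply/orP; right.
  have /card_gt0P[y] : (0 < #|nbhd e x|)%N by rewrite reg.
  by rewrite inE => /(edge_regular_double_deg_le reg_e).
move: count edges bound; rewrite card_C -split_k.
move: #|_ :\: _| #|_ :\ _| (num_edges e) => d s m.
move=> /(congr1 (fun t => t%:R : rat)) count /(congr1 (fun t => t%:R : rat)) edges.
rewrite -(ler_nat rat) => bound.
rewrite -!pmulrn -[s.+1]addn1 -[lambda.+1]addn1 -!addnn !(natrD, natrM) in count edges bound *.
lra.
Qed.
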